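(* Let $i\ge 1$ be an integer and let $\mathcal L_1,\mathcal L_2$ be countable classes of linear orders such that each $L\in\mathcal L_1\cup\mathcal L_2$ is isomorphic to a linear order of the form $\omega\cdot\mathbf i+K$ where $\omega\cdot\mathbf i$ is not isomorphic to any interval of $K$. Then $\mathcal L_1=\mathcal L_2$ (as classes of isomorphism types) if and only if $\mathrm{Shuf}(\mathcal L_1)\cong\mathrm{Shuf}(\mathcal L_2)$. Moreover, if $\mathrm{Shuf}(\mathcal L_1)$ contains an interval isomorphic to $\omega\cdot(\mathbf{i+1})$, then there is a linear order $K$ with $\omega\cdot(\mathbf{i+1})+K\in\mathcal L_1$ (up to isomorphism).
   Context: $\mathbf n$ is the finite linear order with $n$ elements, $\omega$ the order type of $(\mathbb N;\le)$, $L_1+L_2$ the ordered sum ($L_1$ before $L_2$), and $L_1\cdot L_2$ is the sum over $L_2$ of copies of $L_1$ (so $\omega\cdot\mathbf i$ is $i$ copies of $\omega$ in sequence). An interval is a convex subset. For a countable set $I$, a dense $I$-coloring of $\mathbb Q$ is a map $c:\mathbb Q\to I$ taking every value of $I$ between any two rationals; for $\mathcal L=\{L_j\mid j\in I\}$, $\mathrm{Shuf}(\mathcal L)=\sum_{x\in\mathbb Q}L_{c(x)}$ (independent of $c$ up to isomorphism). ''$\mathcal L_1=\mathcal L_2$'' means every member of each class is isomorphic to a member of the other; ''$L\in\mathcal L$'' means $\mathcal L$ contains an order isomorphic to $L$. *)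

From mathcomp Require Import all_boot all_order all_algebra.
Set Implicit Arguments.
Unset Strict Implicit.
Unset Printing Implicit Defensive.
Import Order.TTheory GRing.Theory Num.Theory.

Record LO := MkLO { car :> Type; le : car -> car -> Prop }.
Arguments le {l} _ _.

Definition is_lin_order (L : LO) : Prop :=
  [/\ (forall x : L, le x x),
      (forall x y : L, le x y -> le y x -> x = y),
      (forall x y z : L, le x y -> le y z -> le x z)
    & (forall x y : L, le x y \/ le y x)].

Definition iso (L M : LO) : Prop :=
  exists f : L -> M, bijective f /\ forall x y : L, le x y <-> le (f x) (f y).

Definition lt_of (L : LO) (x y : L) : Prop := le x y /\ x <> y.

Definition LOsum (J : LO) (F : J -> LO) : LO :=
  @MkLO {j : J & F j}
    (fun p q => lt_of (projT1 p) (projT1 q) \/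
       exists (j : J) (x y : F j), p = existT _ j x /\ q = existT _ j y /\ le x y).

Definition LOplus (L1 L2 : LO) : LO :=
  @MkLO (L1 + L2)%type
    (fun p q => match p, q with
                | inl x, inl y => le x y
                | inl _, inr _ => True
                | inr _, inl _ => False
                | inr x, inr y => le x y
                end).

Definition LOtimes (L1 L2 : LO) : LO := LOsum (fun _ : L2 => L1).

Definition omegaLO : LO := @MkLO nat (fun m n => (m <= n)%N).
Definition finLO (n : nat) : LO := @MkLO 'I_n (fun a b => (a <= b)%N).
Definition ratLO : LO := @MkLO rat (fun x y => (x <= y)%R).

Definition omega_times (i : nat) : LO := LOtimes omegaLO (finLO i).

(* Intervals = convex subsets, with the induced order. *)
Definition convex (L : LO) (S : L -> Prop) : Prop :=
  forall x y z : L, S x -> S z -> le x y -> le y z -> S y.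
Definition subLO (L : LO) (S : L -> Prop) : LO :=
  @MkLO {x : L | S x} (fun a b => le (proj1_sig a) (proj1_sig b)).
Definition has_interval_iso (K M : LO) : Prop :=
  exists S : K -> Prop, convex S /\ iso M (subLO S).

Definition dense_coloring (I : Type) (c : rat -> I) : Prop :=
  forall p q : rat, (p < q)%R -> forall j : I, exists x : rat, (p < x < q)%R /\ c x = j.

Definition Shuf (I : Type) (c : rat -> I) (L : I -> LO) : LO :=
  LOsum (fun x : ratLO => L (c x)).

Definition same_class (I1 I2 : Type) (L1 : I1 -> LO) (L2 : I2 -> LO) : Prop :=
  (forall j1, exists j2, iso (L1 j1) (L2 j2)) /\
  (forall j2, exists j1, iso (L2 j2) (L1 j1)).

Definition good_form (i : nat) (L : LO) : Prop :=
  exists K : LO, is_lin_order K /\ iso L (LOplus (omega_times i) K) /\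
                 ~ has_interval_iso K (omega_times i).

(* Two points of Shuf(L) lie in the same block iff no two consecutive convex
   copies of omega.i fit between them: between distinct blocks lie whole blocks,
   each beginning with omega.i, while inside a block omega.i + K the second copy
   must start in the omega.i part (K has no interval omega.i), leaving only
   finitely many points for the last omega of the first copy.  So isomorphisms of
   shuffles map blocks onto blocks; conversely a back-and-forth argument on Q
   matching blocks with isomorphic orders builds an isomorphism.  A convex copy of
   omega.(i+1) also stays in one block: every block strictly inside it starts at a
   point without immediate predecessor, i.e. at the start of one of its i+1 copies
   of omega, but there are infinitely many such blocks.  Inside omega.i + K such a
   copy forces K to begin with omega. *)

From mathcomp Require Import all_boot all_order all_algebra.
From mathcomp Require Import lra.
From Stdlib Require Import ClassicalEpsilon Classical Eqdep_dec ProofIrrelevance.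
Set Implicit Arguments. Unset Strict Implicit. Unset Printing Implicit Defensive.
Import Order.TTheory GRing.Theory Num.Theory.

Definition order_emb (A B : LO) (e : A -> B) := forall x y, le x y <-> le (e x) (e y).

Definition convex_emb (A B : LO) (e : A -> B) :=
  order_emb e /\ forall x y (z : B), le (e x) z -> le z (e y) -> exists w, z = e w.

Section LinearOrder.
Variable L : LO.
Hypothesis HL : is_lin_order L.

Lemma lo_refl (x : L) : le x x. Proof. by case: HL. Qed.
Lemma lo_anti (x y : L) : le x y -> le y x -> x = y. Proof. by case: HL => _ H _ _; apply: H. Qed.
Lemma lo_trans (x y z : L) : le x y -> le y z -> le x z. Proof. by case: HL => _ _ H _; apply: H. Qed.
Lemma lo_total (x y : L) : le x y \/ le y x. Proof. by case: HL. Qed.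
Lemma lt_ofW (x y : L) : lt_of x y -> le x y. Proof. by case. Qed.

Lemma lt_ofNle (x y : L) : lt_of x y <-> ~ le y x.
Proof.
split; first by case=> H1 H2 H3; apply: H2; apply: lo_anti.
move=> H; split; first by case: (lo_total x y) => // /H.
by move=> E; apply: H; rewrite E; apply: lo_refl.
Qed.
End LinearOrder.

Lemma order_emb_inj (A B : LO) (e : A -> B) :
  is_lin_order A -> is_lin_order B -> order_emb e -> injective e.
Proof. by move=> HA HB He x y Exy; apply: (lo_anti HA); apply/He; rewrite Exy; exact: lo_refl. Qed.

Lemma order_emb_lt (A B : LO) (e : A -> B) : is_lin_order A -> is_lin_order B -> order_emb e ->
  forall x y, lt_of x y <-> lt_of (e x) (e y).
Proof.
move=> HA HB He x y; rewrite (lt_ofNle HA) (lt_ofNle HB).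
by split=> H1 H2; apply: H1; apply/He.
Qed.

Lemma inj_surj_bijective (A B : Type) (f : A -> B) :
  injective f -> (forall y, exists x, f x = y) -> bijective f.
Proof.
move=> Hi Hs.
pose g y := proj1_sig (constructive_indefinite_description _ (Hs y)).
have Hg y : f (g y) = y by rewrite /g; case: constructive_indefinite_description.
by exists g => [x|y]; [apply: Hi; rewrite Hg|rewrite Hg].
Qed.

Lemma iso_sym (A B : LO) : iso A B -> iso B A.
Proof.
case=> f [[g fK gK] Hf]; exists g; split; first by exists f.
by move=> x y; rewrite Hf !gK.
Qed.

Lemma iso_trans (A B C : LO) : iso A B -> iso B C -> iso A C.
Proof.
case=> f [bf Hf] [g [bg Hg]]; exists (g \o f); split; first exact: bij_comp.
by move=> x y; rewrite Hf Hg.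
Qed.

Lemma iso_refl (A : LO) : iso A A.
Proof. by exists id; split; [exists id|]. Qed.

Lemma iso_of_order_emb (A B : LO) (f : A -> B) : is_lin_order A -> is_lin_order B ->
  order_emb f -> (forall y, exists x, f x = y) -> iso A B.
Proof.
move=> HA HB Hf Hs; exists f; split => //.
exact: inj_surj_bijective (order_emb_inj HA HB Hf) Hs.
Qed.

Lemma convex_emb_bij (A B : LO) (f : A -> B) : bijective f -> order_emb f -> convex_emb f.
Proof. by case=> g fK gK Hf; split=> // x y z _ _; exists (g z); rewrite gK. Qed.

Lemma convex_emb_comp (A B C : LO) (e1 : A -> B) (e2 : B -> C) :
  convex_emb e1 -> convex_emb e2 -> convex_emb (e2 \o e1).
Proof.
case=> E1 C1 [E2 C2]; split=> [x y|x y z H1 H2]; first by rewrite E1 E2.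
have [w Ez] := C2 (e1 x) (e1 y) z H1 H2; subst z.
have [v ->] := C1 _ _ _ (proj2 (E2 _ _) H1) (proj2 (E2 _ _) H2); by exists v.
Qed.

Lemma subLO_lin (K : LO) (S : K -> Prop) : is_lin_order K -> is_lin_order (subLO S).
Proof.
move=> HK; split.
- by move=> x; exact: (lo_refl HK).
- move=> [x px] [y py] /= H1 H2; move: px py; rewrite (lo_anti HK H1 H2) => px py.
  by rewrite (proof_irrelevance _ px py).
- by move=> x y z; exact: (lo_trans HK).
- by move=> x y; exact: (lo_total HK).
Qed.

Lemma convex_emb_of_interval (K M : LO) :
  has_interval_iso K M -> exists e : M -> K, convex_emb e.
Proof.
case=> S [HS [f [[g fK gK] Hf]]].
exists (fun m => proj1_sig (f m)); split => // x y z H1 H2.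
have Sz : S z by apply: (HS _ _ _ (proj2_sig (f x)) (proj2_sig (f y))).
by exists (g (exist _ z Sz)); rewrite gK.
Qed.

Lemma interval_of_convex_emb (K M : LO) (e : M -> K) :
  is_lin_order M -> is_lin_order K -> convex_emb e -> has_interval_iso K M.
Proof.
move=> HM HK [He Hc].
exists (fun z => exists w, z = e w); split.
  by move=> x y z [a ->] [b ->] H1 H2; apply: Hc H1 H2.
exists (fun m => exist _ (e m) (ex_intro _ m erefl)); split => //.
apply: inj_surj_bijective.
  move=> a b E; apply: (order_emb_inj HM HK He); exact: (f_equal (@proj1_sig _ _) E).
move=> [z [w Ew]]; exists w; subst z; congr exist; exact: proof_irrelevance.
Qed.

Definition no_pred (M : LO) (m : M) := forall q, lt_of q m -> exists r, lt_of q r /\ lt_of r m.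

Lemma no_pred_pull (A B : LO) (e : A -> B) w :
  is_lin_order A -> is_lin_order B -> convex_emb e -> no_pred (e w) -> no_pred w.
Proof.
move=> HA HB [He Hc] H q Hq.
have [r [H1 H2]] := H _ (proj1 (order_emb_lt HA HB He _ _) Hq).
have [v Ev] := Hc q w r (lt_ofW H1) (lt_ofW H2); subst r.
by exists v; split; apply/(order_emb_lt HA HB He).
Qed.

Lemma ex_minn_classic (P : nat -> Prop) n : P n -> exists m, P m /\ forall k, P k -> (m <= k)%N.
Proof.
elim/ltn_ind: n => n IH Pn.
case: (classic (exists k, P k /\ (k < n)%N)) => [[k [Pk lt]]|H]; first exact: IH k lt Pk.
exists n; split => // k Pk; rewrite leqNgt; apply/negP => lt; apply: H; by exists k.
Qed.

Lemma LOplus_lin (A B : LO) : is_lin_order A -> is_lin_order B -> is_lin_order (LOplus A B).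
Proof.
move=> HA HB; split.
- by case=> x /=; apply: lo_refl.
- by case=> x [] y //= H1 H2; f_equal; exact: lo_anti H1 H2.
- by case=> x [] y [] z //=; apply: lo_trans.
- by case=> x [] y /=; auto; apply: lo_total.
Qed.

Lemma LOplus_le_inl (A B : LO) (x : LOplus A B) a : le x (inl a) -> exists a', x = inl a'.
Proof. by case: x => [a'|b'] //= _; exists a'. Qed.

Lemma LOplus_ge_inr (A B : LO) (x : LOplus A B) b : le (inr b : LOplus A B) x -> exists b', x = inr b'.
Proof. by case: x => [a'|b'] //= _; exists b'. Qed.

Lemma lt_inl (A B : LO) (a b : A) : lt_of (inl a : LOplus A B) (inl b) <-> lt_of a b.
Proof. by split; case=> H1 H2; split=> // E; apply: H2; [rewrite E|case: E]. Qed.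

Lemma convex_emb_inl (A B : LO) : convex_emb (@inl A B : A -> LOplus A B).
Proof. by split=> // x y [z|z] //= _ H; exists z. Qed.

Lemma convex_emb_inr_factor (A B C : LO) (e : C -> LOplus A B) :
  convex_emb e -> (forall c, exists z, e c = inr z) -> exists e' : C -> B, convex_emb e'.
Proof.
move=> [He Hc] Hr.
pose e' c := proj1_sig (constructive_indefinite_description _ (Hr c)).
have E c : e c = inr (e' c) by rewrite /e'; case: constructive_indefinite_description.
exists e'; split=> [x y|x y z H1 H2]; first by rewrite He !E.
have [w Hw] : exists w, inr z = e w by apply: (Hc x y); rewrite E.
by exists w; move: Hw; rewrite E => -[].
Qed.

Lemma LOplus_iso (A A' B B' : LO) : iso A A' -> iso B B' -> iso (LOplus A B) (LOplus A' B').
Proof.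
case=> f [[f' fK f'K] Hf] [g [[g' gK g'K] Hg]].
exists (fun x => match x with inl a => inl (f a) | inr b => inr (g b) end); split.
  exists (fun x => match x with inl a => inl (f' a) | inr b => inr (g' b) end).
  + by case=> [a|b]; rewrite ?fK ?gK.
  + by case=> [a|b]; rewrite ?f'K ?g'K.
by case=> [a|b] [a'|b'] /=.
Qed.

Lemma LOplus_assoc (A B C : LO) : iso (LOplus (LOplus A B) C) (LOplus A (LOplus B C)).
Proof.
exists (fun x => match x with
  | inl (inl a) => inl a | inl (inr b) => inr (inl b) | inr c => inr (inr c) end); split.
  exists (fun x => match x with
    | inl a => inl (inl a) | inr (inl b) => inl (inr b) | inr (inr c) => inr c end).
  + by case=> [[a|b]|c].
  + by case=> [a|[b|c]].
by case=> [[a|b]|c] [[a'|b']|c'].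
Qed.

Lemma omega_lin : is_lin_order omegaLO.
Proof.
split=> [x|x y|x y z|x y] /=; [exact: leqnn| |exact: leq_trans|].
  by move=> H1 H2; apply: anti_leq; rewrite H1 H2.
by case: (leqP x y) => H; [left|right; exact: ltnW].
Qed.

Definition om {i} (k : 'I_i) (n : nat) : omega_times i :=
  existT (fun _ : finLO i => omegaLO) k n.

Lemma om_eta i (s : omega_times i) : s = om (projT1 s) (projT2 s).
Proof. by case: s. Qed.

Lemma le_om i (k k' : 'I_i) n n' :
  le (om k n) (om k' n') <-> (k < k')%N \/ (k = k' /\ (n <= n')%N).
Proof.
split.
- case=> [[/= H1 H2]|[j [x [y [E1 [E2 H]]]]]].
    by left; rewrite ltn_neqAle H1 andbT; apply/eqP => E; apply: H2; apply: val_inj.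
  right; have:= f_equal (@projT1 _ _) E1; have:= f_equal (@projT1 _ _) E2.
  have:= f_equal (fun s : omega_times i => (projT2 s : nat)) E1.
  have:= f_equal (fun s : omega_times i => (projT2 s : nat)) E2.
  by rewrite /om /= => -> -> -> ->.
- case=> [H|[-> H]]; last by right; exists k', n, n'.
  left; split; first by rewrite /= ltnW.
  move=> E; have E' : k = k' by change (projT1 (om k n) = projT1 (om k' n')); rewrite E.
  by move: H; rewrite E' ltnn.
Qed.

Lemma om_lin i : is_lin_order (omega_times i).
Proof.
split.
- by move=> s; rewrite (om_eta s); apply/le_om; right.
- move=> s t; rewrite (om_eta s) (om_eta t) !le_om.
  case=> [H1|[E1 H1]] [H2|[E2 H2]].
  + by move: (ltn_trans H1 H2); rewrite ltnn.
  + by move: H1; rewrite E2 ltnn.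
  + by move: H2; rewrite E1 ltnn.
  + by rewrite E1; congr om; apply/eqP; rewrite eqn_leq H1 H2.
- move=> s t u; rewrite (om_eta s) (om_eta t) (om_eta u) !le_om.
  case=> [H1|[E1 H1]] [H2|[E2 H2]].
  + by left; exact: ltn_trans H1 H2.
  + by left; rewrite -E2.
  + by left; rewrite E1.
  + by right; split; [rewrite E1|exact: leq_trans H1 H2].
- move=> s t; rewrite (om_eta s) (om_eta t) !le_om.
  case: (ltngtP (projT1 s) (projT1 t)) => H; [left; left|right; left|] => //.
  have E : projT1 s = projT1 t by apply: val_inj.
  case: (leqP (projT2 s) (projT2 t)) => H'; [left|right]; right; split => //.
  exact: ltnW.
Qed.

Lemma lt_om i (k k' : 'I_i) n n' :
  lt_of (om k n) (om k' n') <-> (k < k')%N \/ (k = k' /\ (n < n')%N).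
Proof.
rewrite (lt_ofNle (om_lin i)) le_om; split.
- move=> H; case: (ltngtP k k') => H1; first by left.
    by exfalso; apply: H; left.
  have E : k = k' by apply: val_inj.
  right; split=> //; rewrite ltnNge; apply/negP=> H2; apply: H; right; split => //.
- case=> [H|[E H]] [H1|[E1 H1]].
  + by move: (ltn_trans H H1); rewrite ltnn.
  + by move: H; rewrite E1 ltnn.
  + by move: H1; rewrite E ltnn.
  + by move: (leq_ltn_trans H1 H); rewrite ltnn.
Qed.

Lemma om0_min i (o : 'I_i) (s : omega_times i) : o = 0 :> nat -> le (om o 0) s.
Proof.
move=> o0; rewrite (om_eta s) le_om.
case: (posnP (projT1 s)) => H; last by left; rewrite o0.
by right; split => //; apply: val_inj; rewrite /= o0 H.
Qed.

Lemma no_pred_om m (k : 'I_m) p : no_pred (om k p) -> p = 0.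
Proof.
case: p => // p H.
have [r [H1 H2]] := H _ (proj2 (lt_om _ _ _ _) (or_intror (conj erefl (ltnSn p)))).
move: H1 H2; rewrite (om_eta r) !lt_om.
case=> [Hk|[Ek Hp]]; case=> [Hk'|[Ek' Hp']].
- by move: (ltn_trans Hk Hk'); rewrite ltnn.
- by move: Hk; rewrite Ek' ltnn.
- by move: Hk'; rewrite Ek ltnn.
- by move: (leq_ltn_trans Hp Hp'); rewrite ltnn.
Qed.

Lemma no_pred_om_start n (M : LO) (e : omega_times n -> M) : is_lin_order M -> convex_emb e ->
  forall j : 'I_n, (0 < j)%N -> no_pred (e (om j 0)).
Proof.
move=> HM [He Hc] j j0 q Hq.
have Hj' : (j.-1 < n)%N by exact: leq_ltn_trans (leq_pred j) (ltn_ord j).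
pose j' := Ordinal Hj'.
have HeL := order_emb_lt (om_lin n) HM He.
have Hlt : lt_of (om j' 0) (om j 0) by apply/lt_om; left => /=; rewrite prednK.
case: (classic (lt_of q (e (om j' 0)))) => H.
  by exists (e (om j' 0)); split; last exact/HeL.
have {}H : le (e (om j' 0)) q by apply: NNPP => H'; apply: H; apply/(lt_ofNle HM).
have [w Ew] := Hc _ _ q H (lt_ofW Hq); subst q.
move: Hq; rewrite -HeL (om_eta w) lt_om => Hw.
exists (e (om (projT1 w) (projT2 w).+1)); split; apply/HeL; apply/lt_om.
- by right.
- by case: Hw => [H1|[E1 H1]]; left => //; rewrite E1.
Qed.

Lemma convex_emb_widen i :
  convex_emb (fun s : omega_times i => om (widen_ord (leqnSn i) (projT1 s)) (projT2 s)
                : omega_times i.+1).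
Proof.
split.
- move=> s t; rewrite {1}(om_eta s) {1}(om_eta t) !le_om /=.
  split; case=> [H|[E H]]; (try by left); right; split => //.
  + by rewrite E.
  + by apply: val_inj; move: (f_equal val E).
- move=> s t z H1; rewrite (om_eta z) le_om /= => H2.
  have Hz : (projT1 z < i)%N.
    by case: H2 => [H|[E _]]; [exact: ltn_trans H (ltn_ord _)|rewrite E /=; exact: ltn_ord].
  by exists (om (Ordinal Hz) (projT2 z)); congr om; exact: val_inj.
Qed.

Lemma omega_times_succ i : iso (LOplus (omega_times i) omegaLO) (omega_times i.+1).
Proof.
pose g (x : LOplus (omega_times i) omegaLO) : omega_times i.+1 := match x with
  | inl s => om (widen_ord (leqnSn i) (projT1 s)) (projT2 s) | inr n => om ord_max n end.
apply: (@iso_of_order_emb _ _ g (LOplus_lin (om_lin i) omega_lin) (om_lin i.+1)).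
- case=> [s|n] [t|n'] /=.
  + exact: (proj1 (convex_emb_widen i)).
  + by split=> // _; apply/le_om; left; rewrite /= ltn_ord.
  + split=> // /le_om [H|[E _]]; move: (ltn_ord (projT1 t)).
      by rewrite ltnNge ltnW.
    by move: (f_equal val E) => /= <-; rewrite ltnn.
  + by split=> [H|/le_om [|[_ H]]]; [apply/le_om; right|rewrite ltnn|].
- move=> s; rewrite (om_eta s); case: (ltngtP (projT1 s) i) => H.
  + by exists (inl (om (Ordinal H) (projT2 s))); congr om; apply: val_inj.
  + by move: (ltn_ord (projT1 s)); rewrite ltnS leqNgt H.
  + by exists (inr (projT2 s)); congr om; apply: val_inj.
Qed.

Lemma iso_omega_plus_rest (K : LO) (w : nat -> K) : is_lin_order K ->
  (forall n n', le (w n) (w n') <-> (n <= n')%N) ->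
  (forall z n, le z (w n) -> exists n', z = w n') ->
  iso (LOplus omegaLO (subLO (fun z : K => ~ exists n, z = w n))) K.
Proof.
move=> HK Hw Hinit.
have Hbelow (z : K) n : ~ (exists n', z = w n') -> lt_of (w n) z.
  by move=> Hz; apply/(lt_ofNle HK) => H; apply: Hz; exact: Hinit H.
pose g (x : LOplus omegaLO (subLO (fun z : K => ~ exists n, z = w n))) :=
  match x with inl n => w n | inr z => proj1_sig z end.
apply: (@iso_of_order_emb _ _ g (LOplus_lin omega_lin (subLO_lin _ HK)) HK).
- case=> [n|[z Hz]] [n'|[z' Hz']] /=.
  + by rewrite Hw.
  + by split=> // _; exact: lt_ofW (Hbelow _ _ Hz').
  + by split=> // H; apply: Hz; exact: Hinit H.
  + by [].
- move=> z; case: (classic (exists n, z = w n)) => [[n ->]|Hz]; first by exists (inl n).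
  by exists (inr (exist _ z Hz)).
Qed.

Section OmegaTimesPlus.
Variables (m : nat) (K : LO).
Hypothesis HK : is_lin_order K.
Local Notation M := (LOplus (omega_times m) K).

Let HM : is_lin_order M := LOplus_lin (om_lin m) HK.

(* Starts of copies of omega are limit points, hence map to starts at least as high. *)
Lemma convex_emb_level_mono n (e : omega_times n -> M) : convex_emb e ->
  forall J (HJ : (J < n)%N) s, e (om (Ordinal HJ) 0) = inl s ->
  forall j (Hj : (j < n)%N), (j <= J)%N ->
  exists k p, e (om (Ordinal Hj) 0) = inl (om k p) /\ (j <= k)%N.
Proof.
move=> [He Hc] J HJ s0 Es0.
have Hinl j (Hj : (j < n)%N) : (j <= J)%N -> exists k p, e (om (Ordinal Hj) 0) = inl (om k p).
  move=> HjJ; have [[k p] ->] : exists t, e (om (Ordinal Hj) 0) = inl t.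
    apply: (@LOplus_le_inl _ _ _ s0); rewrite -Es0; apply/He/le_om.
    rewrite leq_eqVlt in HjJ; case/orP: HjJ => H; last by left.
    by right; split => //; apply: val_inj; exact/eqP.
  by exists k, p.
elim=> [|j IH] Hj HjJ.
  by have [k [p ->]] := Hinl _ Hj HjJ; exists k, p.
have [k' [p' E']] := Hinl _ Hj HjJ; exists k', p'; split => //.
have Hj' : (j < n)%N by exact: ltnW.
have p0 : p' = 0.
  apply: (@no_pred_om _ k'); apply: (no_pred_pull (om_lin m) HM (convex_emb_inl _ _)).
  by rewrite -E'; exact: (no_pred_om_start HM (conj He Hc) (j := Ordinal Hj)).
have [k [p [E Hk]]] := IH Hj' (ltnW HjJ).
have : lt_of (om (Ordinal Hj') 0) (om (Ordinal Hj) 0) by apply/lt_om; left.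
rewrite (order_emb_lt (om_lin n) HM He) E E' lt_inl lt_om p0.
by case=> [H|[_ H]] //; exact: leq_ltn_trans Hk H.
Qed.

Hypothesis Hno : ~ has_interval_iso K (omega_times m).

Lemma convex_emb_start_inl (e : omega_times m -> M) (o : 'I_m) :
  convex_emb e -> o = 0 :> nat -> exists s, e (om o 0) = inl s.
Proof.
move=> Ce o0; case Eo: (e (om o 0)) => [s|z]; first by exists s.
have Hr c : exists z', e c = inr z'.
  by apply: (@LOplus_ge_inr _ _ _ z); rewrite -Eo; apply/(proj1 Ce); exact: om0_min.
have [e' Ce'] := convex_emb_inr_factor Ce Hr.
by case: Hno; exact: (interval_of_convex_emb (om_lin m) HK Ce').
Qed.

Lemma no_consecutive_copies : (1 <= m)%N ->
  forall e1 e2 : omega_times m -> M, convex_emb e1 -> convex_emb e2 ->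
  ~ (forall a b, lt_of (e1 a) (e2 b)).
Proof.
move=> m1 e1 e2 C1 C2 Hlt.
pose o : 'I_m := Ordinal m1.
have [[k n] Es] := convex_emb_start_inl C2 (erefl : o = 0 :> nat).
have HJ : (m.-1 < m)%N by rewrite prednK.
have [s1 Es1] : exists s1, e1 (om (Ordinal HJ) 0) = inl s1.
  by apply: (@LOplus_le_inl _ _ _ (om k n)); rewrite -Es; exact: lt_ofW (Hlt _ _).
have [k1 [p1 [E1 Hk1]]] := convex_emb_level_mono C1 Es1 HJ (leqnn _).
have Ek1 : nat_of_ord k1 = m.-1 by apply/eqP; rewrite eqn_leq Hk1 andbT -ltnS prednK.
have Ekk : k1 = k.
  have := Hlt (om (Ordinal HJ) 0) (om o 0); rewrite E1 Es lt_inl lt_om.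
  case=> [H|[-> //]]; exfalso; move: H; rewrite Ek1 ltnNge -ltnS prednK //.
  by rewrite ltn_ord.
have Hm q : exists r, e1 (om (Ordinal HJ) q) = inl (om k r) /\ (q <= r)%N /\ (r < n)%N.
  elim: q => [|q [r [Eq [Hqr Hrn]]]].
    exists p1; rewrite E1 Ekk; split => //; split => //.
    have := Hlt (om (Ordinal HJ) 0) (om o 0); rewrite E1 Es Ekk lt_inl lt_om.
    by case=> [|[]//]; rewrite ltnn.
  have Hlt1 := Hlt (om (Ordinal HJ) q.+1) (om o 0); rewrite Es in Hlt1.
  have [[k' r'] Es'] := LOplus_le_inl (lt_ofW Hlt1).
  move: Hlt1; rewrite Es' lt_inl lt_om => H2.
  have : lt_of (om (Ordinal HJ) q) (om (Ordinal HJ) q.+1) by apply/lt_om; right.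
  rewrite (order_emb_lt (om_lin m) HM (proj1 C1)) Eq Es' lt_inl lt_om => H1.
  case: H1 => [H1|[E H1]]; case: H2 => [H2|[E2 H2]].
  - by move: (ltn_trans H1 H2); rewrite ltnn.
  - by move: H1; rewrite E2 ltnn.
  - by move: H2; rewrite -E ltnn.
  - by exists r'; rewrite -E; split => //; split => //; exact: leq_ltn_trans Hqr H1.
have [r [_ [H1 H2]]] := Hm n.
by move: (leq_ltn_trans H1 H2); rewrite ltnn.
Qed.

(* The first copy of omega in [omega.(m+1)] whose image meets [K] starts an
   initial segment of [K] of type omega. *)
Lemma initial_omega_of_convex_emb (e : omega_times m.+1 -> M) : (1 <= m)%N -> convex_emb e ->
  exists w : nat -> K, (forall n n', le (w n) (w n') <-> (n <= n')%N) /\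
                       (forall z n, le z (w n) -> exists n', z = w n').
Proof.
move=> m1 Ce; have [He Hc] := Ce.
have Hup a b z : le a b -> e a = inr z -> exists z', e b = inr z'.
  by move=> /He + Ez; rewrite Ez => /LOplus_ge_inr.
have [z0 Ez0] : exists z0, e (om (Ordinal (ltnSn m)) 0) = inr z0.
  case E: (e _) => [s|z]; last by exists z.
  have [k [p [_ Hk]]] := convex_emb_level_mono Ce E (ltnSn m) (leqnn _).
  by move: (ltn_ord k); rewrite ltnNge Hk.
have [s0 Es0] : exists s0, e (om ord0 0) = inl s0.
  have [s Es] := convex_emb_start_inl (convex_emb_comp (convex_emb_widen m) Ce)
                   (o := Ordinal m1) erefl.
  by exists s; rewrite -Es /=; congr (e (om _ 0)); exact: val_inj.
pose P k := (k <= m)%N /\ exists n z, e (om (inord k) n) = inr z.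
have PI : P m.
  split => //; exists 0, z0; rewrite -Ez0; congr (e (om _ 0)).
  by apply: val_inj; rewrite /= inordK.
have [k0 [[Hk0 [n1 [z1 Hn1]]] Hmin]] := ex_minn_classic PI.
have [n0 [[zn0 Hn0] Hminn]] :=
  ex_minn_classic (P := fun n => exists z, e (om (inord k0) n) = inr z) (ex_intro _ z1 Hn1).
pose w q := if e (om (inord k0) (n0 + q)) is inr z then z else z0.
have Ew q : e (om (inord k0) (n0 + q)) = inr (w q).
  have H : le (om (inord k0) n0 : omega_times m.+1) (om (inord k0) (n0 + q)).
    by apply/le_om; right; split => //; exact: leq_addr.
  by have [z Ez] := Hup _ _ _ H Hn0; rewrite /w Ez.
exists w; split.
  move=> q q'; change (le (inr (w q) : M) (inr (w q')) <-> (q <= q')%N).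
  rewrite -!Ew -He le_om ltnn leq_add2l; split; [by case=> [|[]]|by right].
move=> z q Hz.
have H1 : le (e (om ord0 0)) (inr z : M) by rewrite Es0.
have H2 : le (inr z : M) (e (om (inord k0) (n0 + q))) by rewrite Ew.
have [a Ea] := Hc _ _ _ H1 H2.
move: Ea H2; rewrite (om_eta a); set k' := projT1 a; set n' := projT2 a => Ea.
have Pk' : P k' by split; [rewrite -ltnS; exact: ltn_ord|exists n', z; rewrite inord_val].
rewrite Ea -He le_om => -[H|[Ek _]].
  by move: (leq_ltn_trans (Hmin _ Pk') H); rewrite inordK ?ltnn.
rewrite Ek in Ea; have Hn' := Hminn _ (ex_intro _ z (esym Ea)).
exists (n' - n0); move: (Ew (n' - n0)); rewrite subnKC // -Ea.
by case.
Qed.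

Lemma omega_succ_prefix (e : omega_times m.+1 -> M) : (1 <= m)%N -> convex_emb e ->
  exists K' : LO, is_lin_order K' /\ iso (LOplus (omega_times m.+1) K') M.
Proof.
move=> m1 Ce; have [w [Hw Hinit]] := initial_omega_of_convex_emb m1 Ce.
exists (subLO (fun z : K => ~ exists n, z = w n)); split; first exact: subLO_lin.
apply: iso_trans (LOplus_iso (iso_sym (omega_times_succ m)) (iso_refl _)) _.
apply: iso_trans (LOplus_assoc _ _ _) _.
exact: LOplus_iso (iso_refl _) (iso_omega_plus_rest HK Hw Hinit).
Qed.
End OmegaTimesPlus.

Lemma existT_eq_inj (T : eqType) (P : T -> Type) x (a b : P x) :
  existT P x a = existT P x b -> a = b.
Proof. exact: (inj_pair2_eq_dec _ (@eq_comparable T)). Qed.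

Section SumsOverRat.
Variable F : ratLO -> LO.
Local Notation S := (LOsum F).

Lemma le_LOsum_same x (a b : F x) : @le S (existT _ x a) (existT _ x b) <-> le a b.
Proof.
split; last by move=> H; right; exists x, a, b.
case=> [[_ H]|[j [a' [b' [E1 [E2 H]]]]]] //.
have Ej : x = j by exact: (f_equal (@projT1 _ _) E1).
by subst j; rewrite (existT_eq_inj E1) (existT_eq_inj E2).
Qed.

Lemma le_LOsum_diff x y (a : F x) (b : F y) : x <> y ->
  (@le S (existT _ x a) (existT _ y b) <-> (x < y)%R).
Proof.
move=> ne; split; last by move=> H; left; split => //=; apply: ltW.
case=> [[/= H1 H2]|[j [a' [b' [E1 [E2 H]]]]]].
  by rewrite lt_neqAle H1 andbT; apply/eqP.
by case: ne; move: (f_equal (@projT1 _ _) E1) (f_equal (@projT1 _ _) E2) => /= -> ->.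
Qed.

Lemma LOsum_lin : (forall x, is_lin_order (F x)) -> is_lin_order S.
Proof.
move=> HF; split.
- by case=> x a; apply/le_LOsum_same; apply: lo_refl.
- case=> x a [y b]; case: (eq_comparable x y) => [E|ne].
    by subst y; rewrite !le_LOsum_same => H1 H2; rewrite (lo_anti (HF x) H1 H2).
  rewrite !le_LOsum_diff // => [H1 H2|]; last by move=> E; apply: ne.
  by move: (lt_trans H1 H2); rewrite ltxx.
- case=> x a [y b] [z c].
  case: (eq_comparable x y) => [Exy|nxy]; case: (eq_comparable y z) => [Eyz|nyz].
  + by subst; rewrite !le_LOsum_same; exact: lo_trans.
  + by subst; rewrite le_LOsum_same !le_LOsum_diff.
  + by subst; rewrite le_LOsum_same !le_LOsum_diff.
  + rewrite (le_LOsum_diff _ _ nxy) (le_LOsum_diff _ _ nyz) => H1 H2.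
    have H := lt_trans H1 H2.
    by apply/le_LOsum_diff => // E; move: H; rewrite E ltxx.
- case=> x a [y b]; case: (eq_comparable x y) => [E|ne].
    by subst y; rewrite !le_LOsum_same; exact: lo_total.
  rewrite (le_LOsum_diff _ _ ne) le_LOsum_diff; last by move=> E; apply: ne.
  by case: (ltgtP x y) => E; auto; case: ne.
Qed.

Lemma le_LOsum_proj (s t : S) : le s t -> (projT1 s <= projT1 t)%R.
Proof.
case: s => x a; case: t => y b /=.
case: (eq_comparable x y) => [E _|ne]; first by rewrite E.
by move/(le_LOsum_diff _ _ ne) => /ltW.
Qed.

Lemma lt_LOsum_proj (s t : S) : (projT1 s < projT1 t)%R -> lt_of s t.
Proof.
case: s => x a; case: t => y b /= H.
have ne : x <> y by move=> E; move: H; rewrite E ltxx.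
by split; [apply/le_LOsum_diff|move=> [E]].
Qed.

Lemma convex_emb_block x : convex_emb (fun a : F x => existT (fun y => car (F y)) x a : S).
Proof.
split=> [a b|a b [y c] H1 H2]; first by rewrite le_LOsum_same.
case: (eq_comparable x y) => [E|ne]; first by subst y; exists c.
move: H1 H2; rewrite !le_LOsum_diff // => [H1 H2|]; last by move=> E; apply: ne.
by move: (lt_trans H1 H2); rewrite ltxx.
Qed.

Lemma convex_emb_block_factor (A : LO) (e : A -> S) x :
  (forall a, projT1 (e a) = x) -> convex_emb e ->
  exists e' : A -> F x, convex_emb e' /\ forall a, e a = existT _ x (e' a).
Proof.
move=> Hx [He Hc].
have H a : exists b, e a = existT _ x b.
  by move: (Hx a); case: (e a) => y b /= E; subst y; exists b.
pose e' a := proj1_sig (constructive_indefinite_description _ (H a)).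
have E a : e a = existT _ x (e' a) by rewrite /e'; case: constructive_indefinite_description.
exists e'; split=> //; split=> [a b|a b z H1 H2]; first by rewrite He !E le_LOsum_same.
have [w Ew] : exists w, existT _ x z = e w by apply: (Hc a b); rewrite E le_LOsum_same.
by exists w; move: Ew; rewrite E => /(@existT_eq_inj _ (fun y => car (F y))).
Qed.
End SumsOverRat.

Definition two_copies_between (S : LO) i (p q : S) := exists e1 e2 : omega_times i -> S,
  [/\ convex_emb e1, convex_emb e2, (forall a b, lt_of (e1 a) (e2 b)),
      (forall a, le p (e1 a) /\ le (e1 a) q) & (forall a, le p (e2 a) /\ le (e2 a) q)].

Lemma two_copies_between_convex_emb (S T : LO) i (f : S -> T) (p q : S) :
  is_lin_order S -> is_lin_order T -> convex_emb f ->
  two_copies_between i p q -> two_copies_between i (f p) (f q).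
Proof.
move=> HS HT Cf [e1 [e2 [C1 C2 Hlt H1 H2]]].
exists (f \o e1), (f \o e2); split; try exact: convex_emb_comp.
- by move=> a b; apply/(order_emb_lt HS HT (proj1 Cf)).
- by move=> a; case: (H1 a) => A B; split; apply/(proj1 Cf).
- by move=> a; case: (H2 a) => A B; split; apply/(proj1 Cf).
Qed.

Section Shuffle.
Variables (i : nat) (I : Type) (c : rat -> I) (L : I -> LO).
Hypothesis i1 : (1 <= i)%N.
Hypothesis HL : forall j, is_lin_order (L j).
Hypothesis HG : forall j, good_form i (L j).
Local Notation S := (Shuf c L).
Local Notation F := (fun x : ratLO => L (c x)).

Lemma Shuf_lin : is_lin_order S.
Proof. exact: (LOsum_lin (F := F)). Qed.

Lemma block_start x : exists s : S, projT1 s = x /\ forall b, le s (existT _ x b).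
Proof.
have [K [HK [[f [[g fK gK] Hf]] _]]] := HG (c x).
exists (existT (fun y => car (F y)) x (g (inl (om (Ordinal i1) 0)))); split => // b.
apply/(le_LOsum_same (F := F)); apply/Hf; rewrite gK.
by case: (f b) => [s|z] //=; exact: om0_min.
Qed.

Lemma block_copy x : exists e : omega_times i -> S, convex_emb e /\ forall a, projT1 (e a) = x.
Proof.
have [K [HK [Hiso _]]] := HG (c x).
have [g [bg Hg]] := iso_sym Hiso.
have Ce := convex_emb_comp (convex_emb_comp (convex_emb_inl _ K) (convex_emb_bij bg Hg))
                           (convex_emb_block F x).
by exists (fun a => existT (fun y => car (F y)) x (g (inl a))).
Qed.

Lemma two_copies_between_blocks (p q : S) : (projT1 p < projT1 q)%R -> two_copies_between i p q.
Proof.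
move=> H; set x := projT1 p in H; set y := projT1 q in H.
have [e1 [C1 E1]] := block_copy ((x + x + y) / 3%:R)%R.
have [e2 [C2 E2]] := block_copy ((x + y + y) / 3%:R)%R.
exists e1, e2; split => //.
- by move=> a b; apply: lt_LOsum_proj; rewrite E1 E2; lra.
- by move=> a; split; apply: lt_ofW; apply: lt_LOsum_proj; rewrite E1 -/x -/y; lra.
- by move=> a; split; apply: lt_ofW; apply: lt_LOsum_proj; rewrite E2 -/x -/y; lra.
Qed.

Lemma no_two_copies_in_block (p q : S) : projT1 p = projT1 q -> ~ two_copies_between i p q.
Proof.
move=> Epq [e1 [e2 [C1 C2 Hlt H1 H2]]].
set x := projT1 p.
have Hx (e : omega_times i -> S) : (forall a, le p (e a) /\ le (e a) q) -> forall a, projT1 (e a) = x.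
  move=> H a; case: (H a) => /le_LOsum_proj A /le_LOsum_proj B.
  by apply/eqP; rewrite eq_le A andbT /x Epq.
have [e1' [C1' E1]] := convex_emb_block_factor (Hx _ H1) C1.
have [e2' [C2' E2]] := convex_emb_block_factor (Hx _ H2) C2.
have [K [HK [[f [bf Hf]] Hno]]] := HG (c x).
have Cf := convex_emb_bij bf Hf.
apply: (no_consecutive_copies HK Hno i1 (convex_emb_comp C1' Cf) (convex_emb_comp C2' Cf)).
move=> a b /=; apply/(order_emb_lt (HL _) (LOplus_lin (om_lin i) HK) Hf).
have [A B] := Hlt a b; move: A B; rewrite E1 E2 => A B.
by split; [exact/(le_LOsum_same (F := F))|move=> E; apply: B; rewrite E].
Qed.

Lemma block_start_no_pred (s : S) x :
  projT1 s = x -> (forall b, le s (existT _ x b)) -> no_pred s.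
Proof.
move=> Ps Hmin q Hq.
have Hq1 : projT1 q <> x.
  case: q Hq => z b /= [Hle Hne] Ez; subst z.
  by apply: Hne; apply: (lo_anti Shuf_lin Hle); exact: Hmin.
have Hq2 : (projT1 q < x)%R.
  by rewrite lt_neqAle -Ps (le_LOsum_proj (lt_ofW Hq)) andbT Ps; apply/eqP.
have [s' [Ps' _]] := block_start ((projT1 q + x) / 2%:R)%R.
by exists s'; split; apply: lt_LOsum_proj; rewrite ?Ps Ps'; lra.
Qed.

Lemma convex_copy_in_block (e : omega_times i.+1 -> S) : convex_emb e ->
  forall a, projT1 (e a) = projT1 (e (om ord0 0)).
Proof.
move=> Ce; have [He Hc] := Ce; have HO := om_lin i.+1.
set x := projT1 (e (om ord0 0)) => a; apply: NNPP => ne; set y := projT1 (e a) in ne.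
have hxy : (x < y)%R.
  rewrite lt_neqAle (le_LOsum_proj (proj1 (He _ _) (om0_min _ _))) // andbT.
  by apply/eqP => E; apply: ne; rewrite E.
pose r t := iter t (fun r => (r + y) / 2%:R)%R ((x + y) / 2%:R)%R.
have Hr t : (x < r t < y)%R by elim: t => [|t /andP [A B]] /=; apply/andP; split; lra.
have G t : exists k : 'I_i.+1, projT1 (e (om k 0)) = r t.
  have [s [Ps Hmin]] := block_start (r t).
  move: (Hr t) => /andP [A B].
  have H1 : le (e (om ord0 0)) s by apply: lt_ofW; apply: lt_LOsum_proj; rewrite Ps.
  have H2 : le s (e a) by apply: lt_ofW; apply: lt_LOsum_proj; rewrite Ps.
  have [w Ew] := Hc _ _ _ H1 H2; subst s.
  have Hw : projT2 w = 0.
    apply: (@no_pred_om _ (projT1 w)); rewrite -om_eta.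
    exact: (no_pred_pull HO Shuf_lin Ce (block_start_no_pred Ps Hmin)).
  by exists (projT1 w); rewrite -Hw -om_eta.
have Hlevels t : exists k : 'I_i.+1, (t <= k)%N /\ projT1 (e (om k 0)) = r t.
  elim: t => [|t [k [Hk Ek]]]; first by have [k Hk] := G 0; exists k.
  have [k' Hk'] := G t.+1; exists k'; split => //.
  have : lt_of (e (om k 0)) (e (om k' 0)).
    by apply: lt_LOsum_proj; rewrite Ek Hk'; move: (Hr t) => /andP [A B] /=; lra.
  rewrite -(order_emb_lt HO Shuf_lin He) lt_om => -[H|[_ H]] //.
  exact: leq_ltn_trans Hk H.
have [k [Hk _]] := Hlevels i.+1.
by move: (ltn_ord k); rewrite ltnNge Hk.
Qed.

Lemma Shuf_interval_omega_succ : has_interval_iso S (omega_times i.+1) ->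
  exists K : LO, is_lin_order K /\ exists j, iso (LOplus (omega_times i.+1) K) (L j).
Proof.
move=> /convex_emb_of_interval [e Ce].
have [e' [Ce' _]] := convex_emb_block_factor (convex_copy_in_block Ce) Ce.
set x := projT1 (e (om ord0 0)) in e' Ce'.
have [K [HK [Hiso Hno]]] := HG (c x).
have [f [bf Hf]] := Hiso.
have [K' [HK' HK'iso]] :=
  omega_succ_prefix HK Hno i1 (convex_emb_comp Ce' (convex_emb_bij bf Hf)).
by exists K'; split => //; exists (c x); exact: iso_trans HK'iso (iso_sym Hiso).
Qed.
End Shuffle.

Section ShuffleIso.
Variables (i : nat) (I1 I2 : Type) (c1 : rat -> I1) (c2 : rat -> I2).
Variables (L1 : I1 -> LO) (L2 : I2 -> LO).
Hypothesis i1 : (1 <= i)%N.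
Hypotheses (HL1 : forall j, is_lin_order (L1 j)) (HL2 : forall j, is_lin_order (L2 j)).
Hypotheses (HG1 : forall j, good_form i (L1 j)) (HG2 : forall j, good_form i (L2 j)).

Lemma Shuf_iso_same_block (f : Shuf c1 L1 -> Shuf c2 L2) : bijective f -> order_emb f ->
  forall p q, projT1 p = projT1 q -> projT1 (f p) = projT1 (f q).
Proof.
case=> g fK gK Hf p q E; apply: NNPP => ne.
have HS1 := Shuf_lin c1 HL1; have HS2 := Shuf_lin c2 HL2.
have Cg : convex_emb g.
  by apply: convex_emb_bij; [exists f|move=> x y; rewrite Hf !gK].
case: (ltgtP (projT1 (f p)) (projT1 (f q))) => H; last exact: ne.
- have := two_copies_between_convex_emb HS2 HS1 Cg (two_copies_between_blocks HG2 H).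
  by rewrite !fK; exact: (no_two_copies_in_block i1 HL1 HG1) E.
- have := two_copies_between_convex_emb HS2 HS1 Cg (two_copies_between_blocks HG2 H).
  by rewrite !fK; exact: (no_two_copies_in_block i1 HL1 HG1) (esym E).
Qed.
End ShuffleIso.

Lemma same_class_of_Shuf_iso i (I1 I2 : Type) (c1 : rat -> I1) (c2 : rat -> I2)
    (L1 : I1 -> LO) (L2 : I2 -> LO) :
  (1 <= i)%N ->
  (forall j, is_lin_order (L1 j)) -> (forall j, is_lin_order (L2 j)) ->
  (forall j, good_form i (L1 j)) -> (forall j, good_form i (L2 j)) ->
  dense_coloring c1 -> iso (Shuf c1 L1) (Shuf c2 L2) ->
  forall j1, exists j2, iso (L1 j1) (L2 j2).
Proof.
move=> i1 HL1 HL2 HG1 HG2 Hd [f [bf Hf]] j1.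
have [g fK gK] := bf.
have Hg : order_emb g by move=> u v; rewrite Hf !gK.
have [x [_ <-]] := Hd 0%R 1%R ltr01 j1.
have [[x' a0] [/= Ex _]] := block_start c1 i1 HG1 x; subst x'.
set y := projT1 (f (existT _ x a0)).
have Hy (a : L1 (c1 x)) : projT1 (f (existT _ x a)) = y.
  exact: (Shuf_iso_same_block i1 HL1 HL2 HG1 HG2 bf Hf (p := existT _ x a) (q := existT _ x a0)).
have Hx b : projT1 (g (existT _ y b)) = x.
  have := Shuf_iso_same_block i1 HL2 HL1 HG2 HG1 (Bijective gK fK) Hg
            (p := existT _ y b) (q := f (existT _ x a0)).
  by rewrite fK => ->.
have Ce : convex_emb (f \o (fun a => existT (fun y => car (L1 (c1 y))) x a)).
  exact: convex_emb_comp (convex_emb_block _ x) (convex_emb_bij bf Hf).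
have [h [[Hh _] Eh]] := convex_emb_block_factor Hy Ce.
exists (c2 y); apply: (iso_of_order_emb (HL1 _) (HL2 _) Hh) => b.
move: (Hx b); case E: (g _) => [x' a] /= Ex'; subst x'.
exists a; have := Eh a; rewrite /= -E gK.
by move/(@existT_eq_inj _ (fun z => car (L2 (c2 z)))).
Qed.

Section FoldrMaxMin.
Context {disp : Order.disp_t} {T : orderType disp}.
Local Open Scope order_scope.

Lemma foldr_max_ub (d : T) s l : l \in d :: s -> l <= foldr Order.max d s.
Proof.
elim: s => [|x s IH] /=; first by rewrite inE => /eqP ->.
rewrite le_max !inE => /or3P [/eqP El|/eqP ->|Hl]; rewrite ?lexx //.
- by rewrite IH ?orbT // inE El eqxx.
- by rewrite IH ?orbT // inE Hl orbT.
Qed.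

Lemma foldr_min_lb (d : T) s l : l \in d :: s -> foldr Order.min d s <= l.
Proof.
elim: s => [|x s IH] /=; first by rewrite inE => /eqP ->.
rewrite ge_min !inE => /or3P [/eqP El|/eqP ->|Hl]; rewrite ?lexx //.
- by rewrite IH ?orbT // inE El eqxx.
- by rewrite IH ?orbT // inE Hl orbT.
Qed.

Lemma foldr_max_mem (d : T) s : foldr Order.max d s \in d :: s.
Proof.
elim: s => [|x s IH] /=; first by rewrite inE.
rewrite maxEle; case: ifP => _; rewrite !inE ?eqxx ?orbT //.
by move: IH; rewrite inE => /orP [->|->]; rewrite ?orbT.
Qed.

Lemma foldr_min_mem (d : T) s : foldr Order.min d s \in d :: s.
Proof.
elim: s => [|x s IH] /=; first by rewrite inE.
rewrite minEle; case: ifP => _; rewrite !inE ?eqxx ?orbT //.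
by move: IH; rewrite inE => /orP [->|->]; rewrite ?orbT.
Qed.
End FoldrMaxMin.

Section RationalBackAndForth.
Local Open Scope ring_scope.

(* The seeds [min hi - 1] and [max lo + 1] avoid a case split on empty lists. *)
Lemma rat_finite_gap (lo hi : seq rat) : (forall l h, l \in lo -> h \in hi -> l < h) ->
  exists p q, p < q /\ (forall l, l \in lo -> l <= p) /\ (forall h, h \in hi -> q <= h).
Proof.
move=> Hlh.
set dl := foldr Order.min 0 hi - 1; set dh := foldr Order.max 0 lo + 1.
have Hmin h : h \in hi -> dl < h.
  by move=> Hh; have := foldr_min_lb (@mem_behead _ (0 :: hi) h Hh); rewrite /dl; lra.
have Hmax l : l \in lo -> l < dh.
  by move=> Hl; have := foldr_max_ub (@mem_behead _ (0 :: lo) l Hl); rewrite /dh; lra.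
exists (foldr Order.max dl lo), (foldr Order.min dh hi); split; last first.
  split=> x Hx; [apply: foldr_max_ub|apply: foldr_min_lb]; exact: (mem_behead (s := _ :: _)).
move: (foldr_max_mem dl lo) (foldr_min_mem dh hi); rewrite !inE.
case/predU1P=> [->|Hl]; case/predU1P=> [->|Hh]; try by [apply: Hmin|apply: Hmax|apply: Hlh].
have := foldr_min_lb (l := 0) (mem_head 0 hi); have := foldr_max_ub (l := 0) (mem_head 0 lo).
by rewrite /dl /dh; lra.
Qed.

Definition partial_iso (R : rat -> rat -> Prop) (P : seq (rat * rat)) :=
  (forall u v, u \in P -> v \in P -> (u.1 < v.1) = (u.2 < v.2)) /\ forall u, u \in P -> R u.1 u.2.

Lemma partial_iso_swap R P :
  partial_iso R P -> partial_iso (fun b a => R a b) [seq (u.2, u.1) | u <- P].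
Proof.
move=> [G1 G2]; split.
- by move=> u v /mapP [u' Hu ->] /mapP [v' Hv ->] /=; rewrite G1.
- by move=> u /mapP [u' Hu ->] /=; apply: G2.
Qed.

Section Forth.
Variable R : rat -> rat -> Prop.
Hypothesis R_forth : forall a p q, p < q -> exists b, p < b < q /\ R a b.

Lemma partial_iso_forth P : partial_iso R P -> forall a, exists b, partial_iso R ((a, b) :: P).
Proof.
move=> [G1 G2] a.
case: (classic (exists u, u \in P /\ u.1 = a)) => [[u [Hu <-]]|Hn].
  exists u.2; split; last by move=> x; rewrite in_cons => /predU1P [->|/G2 //]; exact: G2 Hu.
  move=> x y; rewrite !in_cons => /predU1P [->|Hx] /predU1P [->|Hy] /=;
    by rewrite ?ltxx //; exact: G1.
set lo := [seq u.2 | u <- P & u.1 < a]; set hi := [seq u.2 | u <- P & a < u.1].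
have Hlh l h : l \in lo -> h \in hi -> l < h.
  move=> /mapP [u]; rewrite mem_filter => /andP [H1 H2] -> /mapP [v].
  by rewrite mem_filter => /andP [H3 H4] ->; rewrite -(G1 _ _ H2 H4); exact: lt_trans H1 H3.
have [p [q [pq [Hp Hq]]]] := rat_finite_gap Hlh.
have [b [/andP [pb bq] Rb]] := R_forth a pq.
have Hv v : v \in P -> ((v.1 < a) = (v.2 < b)) /\ ((a < v.1) = (b < v.2)).
  move=> Hv; case: (ltgtP v.1 a) => H.
  - have /Hp H' : v.2 \in lo by apply/mapP; exists v => //; rewrite mem_filter H.
    have H'' : v.2 < b by exact: le_lt_trans H' pb.
    by rewrite H'' ltNge ltW.
  - have /Hq H' : v.2 \in hi by apply/mapP; exists v => //; rewrite mem_filter H.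
    have H'' : b < v.2 by exact: lt_le_trans bq H'.
    by rewrite H'' ltNge ltW.
  - by case: Hn; exists v.
exists b; split; last by move=> x; rewrite in_cons => /predU1P [->|/G2].
move=> x y; rewrite !in_cons => /predU1P [->|Hx] /predU1P [->|Hy] /=.
- by rewrite !ltxx.
- by case: (Hv _ Hy).
- by case: (Hv _ Hx).
- exact: G1.
Qed.

End Forth.

Section BackAndForth.
Variable R : rat -> rat -> Prop.
Hypothesis R_forth : forall a p q, p < q -> exists b, p < b < q /\ R a b.
Hypothesis R_back : forall b p q, p < q -> exists a, p < a < q /\ R a b.

Lemma partial_iso_back P : partial_iso R P -> forall b, exists a, partial_iso R ((a, b) :: P).
Proof.
move=> G b; have [a Ha] := partial_iso_forth (R := fun b a => R a b) R_back (partial_iso_swap G) b.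
exists a; have := partial_iso_swap Ha.
by rewrite /= -map_comp map_id_in // => -[].
Qed.

Definition forth_step P a := epsilon (inhabits 0) (fun b => partial_iso R ((a, b) :: P)).
Definition back_step P b := epsilon (inhabits 0) (fun a => partial_iso R ((a, b) :: P)).
Definition rat_enum (n : nat) : rat := odflt 0 (unpickle n).

Lemma rat_enumK : cancel pickle rat_enum.
Proof. by move=> a; rewrite /rat_enum pickleK. Qed.

Fixpoint bf_seq n :=
  if n is n'.+1 then
    let P := (rat_enum n', forth_step (bf_seq n') (rat_enum n')) :: bf_seq n' in
    (back_step P (rat_enum n'), rat_enum n') :: P
  else [::].

Lemma bf_seq_partial_iso n : partial_iso R (bf_seq n).
Proof.
elim: n => [|n IH] /=; first by split.
have G1 : partial_iso R ((rat_enum n, forth_step (bf_seq n) (rat_enum n)) :: bf_seq n).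
  exact: epsilon_spec (partial_iso_forth R_forth IH (rat_enum n)).
exact: epsilon_spec (partial_iso_back G1 (rat_enum n)).
Qed.

Lemma bf_seq_mono n m u : (n <= m)%N -> u \in bf_seq n -> u \in bf_seq m.
Proof.
move=> /subnKC <-; elim: (m - n)%N => [|k IH] H; first by rewrite addn0.
by rewrite addnS /= !in_cons (IH H) !orbT.
Qed.

Definition bf_map (a : rat) := forth_step (bf_seq (pickle a)) a.

Lemma bf_map_in (a : rat) : (a, bf_map a) \in bf_seq (pickle a).+1.
Proof. by rewrite /= rat_enumK !in_cons /bf_map eqxx orbT. Qed.

Lemma bf_map_onto_in (b : rat) : exists a : rat, (a, b) \in bf_seq (pickle b).+1.
Proof.
exists (back_step ((b, forth_step (bf_seq (pickle b)) b) :: bf_seq (pickle b)) b).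
by rewrite /= rat_enumK in_cons eqxx.
Qed.

Lemma back_and_forth_rat : exists f : rat -> rat, (forall a a', (a < a') = (f a < f a')) /\
  (forall b, exists a, f a = b) /\ forall a, R a (f a).
Proof.
exists bf_map; split; last split.
- move=> a a'; set N := maxn (pickle a).+1 (pickle a').+1.
  have Ha := bf_seq_mono (leq_maxl (pickle a).+1 (pickle a').+1) (bf_map_in a).
  have Ha' := bf_seq_mono (leq_maxr (pickle a).+1 (pickle a').+1) (bf_map_in a').
  exact: (proj1 (bf_seq_partial_iso N) _ _ Ha Ha').
- move=> b; have [a Hab] := bf_map_onto_in b; exists a.
  set N := maxn (pickle b).+1 (pickle a).+1.
  have H1 := bf_seq_mono (leq_maxl (pickle b).+1 (pickle a).+1) Hab.
  have H2 := bf_seq_mono (leq_maxr (pickle b).+1 (pickle a).+1) (bf_map_in a).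
  have E1 := proj1 (bf_seq_partial_iso N) _ _ H1 H2.
  have E2 := proj1 (bf_seq_partial_iso N) _ _ H2 H1.
  move: E1 E2; rewrite /= ltxx => /esym E1 /esym E2.
  by case: (ltgtP b (bf_map a)) E1 E2 => // ->.
- by move=> a; exact: (proj2 (bf_seq_partial_iso _) _ (bf_map_in a)).
Qed.
End BackAndForth.
End RationalBackAndForth.

Lemma Shuf_iso_of_same_class (I1 I2 : Type) (c1 : rat -> I1) (c2 : rat -> I2)
    (L1 : I1 -> LO) (L2 : I2 -> LO) :
  (forall j, is_lin_order (L1 j)) -> (forall j, is_lin_order (L2 j)) ->
  dense_coloring c1 -> dense_coloring c2 ->
  same_class L1 L2 -> iso (Shuf c1 L1) (Shuf c2 L2).
Proof.
move=> HL1 HL2 Hd1 Hd2 [S1 S2].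
pose R a b := iso (L1 (c1 a)) (L2 (c2 b)).
have R_forth a p q : (p < q)%R -> exists b, (p < b < q)%R /\ R a b.
  move=> pq; have [j2 Hj2] := S1 (c1 a).
  by have [b [Hb Eb]] := Hd2 p q pq j2; exists b; rewrite /R Eb.
have R_back b p q : (p < q)%R -> exists a, (p < a < q)%R /\ R a b.
  move=> pq; have [j1 Hj1] := S2 (c2 b).
  by have [a [Ha Ea]] := Hd1 p q pq j1; exists a; split => //; rewrite /R Ea; exact: iso_sym.
have [f [Hmono [Hsurj HR]]] := back_and_forth_rat R_forth R_back.
pose h a := proj1_sig (constructive_indefinite_description _ (HR a)).
have Hh a : bijective (h a) /\ order_emb (h a).
  by rewrite /h; case: constructive_indefinite_description => g [].
pose Phi (s : Shuf c1 L1) : Shuf c2 L2 :=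
  existT (fun y : ratLO => car (L2 (c2 y))) (f (projT1 s)) (h (projT1 s) (projT2 s)).
apply: (@iso_of_order_emb _ _ Phi (Shuf_lin c1 HL1) (Shuf_lin c2 HL2)).
  have PhiE x a : Phi (existT _ x a) = existT (fun y : ratLO => car (L2 (c2 y))) (f x) (h x a).
    by [].
  move=> [x a] [y b]; rewrite !PhiE.
  case: (eq_comparable x y) => [E|ne].
    subst y; rewrite (le_LOsum_same (F := fun z : ratLO => L1 (c1 z))).
    by rewrite (le_LOsum_same (F := fun z : ratLO => L2 (c2 z))); exact: (proj2 (Hh x)).
  have ne' : f x <> f y.
    by move=> E; apply: ne; case: (ltgtP x y) => //; rewrite Hmono E ltxx.
  rewrite (le_LOsum_diff (F := fun z : ratLO => L1 (c1 z)) _ _ ne).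
  by rewrite (le_LOsum_diff (F := fun z : ratLO => L2 (c2 z)) _ _ ne') Hmono.
move=> [y b]; have [x Ex] := Hsurj y; subst y; have [g _ gK] := proj1 (Hh x).
by exists (existT _ x (g b)); rewrite /Phi /= gK.
Qed.

Theorem lemma13 (i : nat) (I1 I2 : countType) (L1 : I1 -> LO) (L2 : I2 -> LO)
    (c1 : rat -> I1) (c2 : rat -> I2) :
  (1 <= i)%N ->
  (forall j, is_lin_order (L1 j)) -> (forall j, is_lin_order (L2 j)) ->
  (forall j, good_form i (L1 j)) -> (forall j, good_form i (L2 j)) ->
  dense_coloring c1 -> dense_coloring c2 ->
  (same_class L1 L2 <-> iso (Shuf c1 L1) (Shuf c2 L2)) /\
  (has_interval_iso (Shuf c1 L1) (omega_times i.+1) ->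
     exists K : LO, is_lin_order K /\ exists j, iso (LOplus (omega_times i.+1) K) (L1 j)).
Proof.
move=> i1 HL1 HL2 HG1 HG2 Hd1 Hd2; split; last exact: Shuf_interval_omega_succ i1 HL1 HG1.
split=> [|Hiso]; first exact: Shuf_iso_of_same_class.
split; first exact: same_class_of_Shuf_iso i1 HL1 HL2 HG1 HG2 Hd1 Hiso.
exact: same_class_of_Shuf_iso i1 HL2 HL1 HG2 HG1 Hd2 (iso_sym Hiso).
Qed.
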